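(* For all integers $m,n\geq 1$, \[p^{od}_{ed}(m,n)-p^{od}_{ed}(m,n-1)=D_o(m,n)-D_e(m,n-1).\]
   Context: $\mathcal{P}^{od}_{ed}$ is the set of integer partitions whose parts are all distinct and such that every even part is smaller than every odd part. Partitions consisting only of odd parts, or only of even parts, are allowed. For integers $m\ge 1$, $n\ge 0$: - $p^{od}_{ed}(m,n)$ is the number of partitions of $n$ in $\mathcal{P}^{od}_{ed}$ with exactly $m$ parts; in particular $p^{od}_{ed}(m,0)=0$. - $D_o(m,n)$ is the number of partitions of $n$ into exactly $m$ distinct odd parts. - $D_e(m,n)$ is the number of partitions of $n$ into exactly $m$ distinct even parts. *)

From mathcomp Require Import all_boot all_order all_algebra.
Set Implicit Arguments. Unset Strict Implicit. Unset Printing Implicit Defensive.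

(* A partition of n into distinct parts is represented by its (finite) set of
   parts: a set S of positive integers (all parts are <= n, so S : {set 'I_n.+1})
   whose elements sum to n. *)
Definition distinct_partitions (n : nat) : {set {set 'I_n.+1}} :=
  [set S : {set 'I_n.+1} | (ord0 \notin S) && (\sum_(i in S) (i : nat) == n)].

Definition pod_ed (m n : nat) : nat :=
  #|[set S in distinct_partitions n |
      (#|S| == m) &&
      [forall i in S, forall j in S, (~~ odd i && odd j) ==> (i < j)]]|.

Definition D_o (m n : nat) : nat :=
  #|[set S in distinct_partitions n | (#|S| == m) && [forall i in S, odd i]]|.

Definition D_e (m n : nat) : nat :=
  #|[set S in distinct_partitions n | (#|S| == m) && [forall i in S, ~~ odd i]]|.

From mathcomp Require Import all_boot all_order all_algebra zify.

(* Split the partitions counted by p^{od}_{ed}(m,n) according to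
   whether they contain an even part: those without one are exactly the
   partitions into m distinct odd parts, so
     p^{od}_{ed}(m,n) = #|with_even m n| + D_o(m,n),
   and symmetrically p^{od}_{ed}(m,n) = #|with_odd m n| + D_e(m,n).
   The theorem then reduces to #|with_even m (k+1)| = #|with_odd m k|, proved
   by an explicit bijection: lowering the largest even part e by one turns a
   partition of k+1 into a partition of k whose smallest odd part is e-1 (all
   even parts stay below it, all odd parts stay above it); raising the
   smallest odd part by one is the inverse map. *)

Set Implicit Arguments.
Unset Strict Implicit.
Unset Printing Implicit Defensive.

Definition part a (S : {set 'I_a}) (v : nat) : bool := [exists i in S, i == v :> nat].

Lemma partP a (S : {set 'I_a}) v :
  reflect (exists2 i : 'I_a, i \in S & (i : nat) = v) (part S v).
Proof. by apply: (iffP exists_inP) => [[i iS /eqP]|[i iS <-]]; exists i. Qed.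

Lemma part_mem a (S : {set 'I_a}) (i : 'I_a) : part S i = (i \in S).
Proof. by apply/partP/idP => [[j jS /val_inj <-] //|iS]; exists i. Qed.

Lemma part_ext a (S1 S2 : {set 'I_a}) : part S1 =1 part S2 -> S1 = S2.
Proof. by move=> E; apply/setP => i; rewrite -!part_mem E. Qed.

Lemma exists_partP a (S : {set 'I_a}) (P : pred nat) :
  reflect (exists2 v, part S v & P v) [exists i in S, P i].
Proof.
apply: (iffP exists_inP) => [[i iS Pi]|[v /partP[i iS <-] Pv]]; last by exists i.
by exists (val i); rewrite ?part_mem.
Qed.

Lemma leq_sum_term (I : finType) (A : {pred I}) (F : I -> nat) i :
  i \in A -> F i <= \sum_(j in A) F j.
Proof. by move=> iA; rewrite (bigD1 i) //= leq_addr. Qed.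

Lemma card_inverse (T U : finType) (A : {set T}) (B : {set U})
    (f : T -> U) (g : U -> T) :
  (forall x, x \in A -> f x \in B /\ g (f x) = x) ->
  (forall y, y \in B -> g y \in A /\ f (g y) = y) -> #|A| = #|B|.
Proof.
move=> fA gB; have fK : {in A, cancel f g} by move=> x /fA[].
rewrite -(card_in_imset (can_in_inj fK)); congr #|pred_of_set _|.
apply/setP => y; apply/imsetP/idP => [[x /fA[fxB _] ->] //|yB].
by have [gyA gyK] := gB y yB; exists (g y).
Qed.

Definition relabel a b (h : nat -> nat) (S : {set 'I_a}) : {set 'I_b.+1} :=
  [set inord (h i) | i : 'I_a in S].

Section Relabel.
Variables (a b : nat) (h : nat -> nat) (S : {set 'I_a}).
Hypothesis h_le : forall i : 'I_a, i \in S -> h i <= b.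

Lemma part_relabelP v : reflect (exists2 i : 'I_a, i \in S & h i = v)
  (part (relabel b h S) v).
Proof.
apply: (iffP (partP _ _)) => [[_ /imsetP[i iS ->]]|[i iS <-]].
  by rewrite inordK ?ltnS ?h_le //; exists i.
by exists (inord (h i)); [apply: imset_f | rewrite inordK ?ltnS ?h_le].
Qed.

Hypothesis h_inj : {in S &, injective (fun i : 'I_a => h i)}.

Lemma relabel_inj : {in S &, injective (fun i : 'I_a => inord (h i) : 'I_b.+1)}.
Proof.
move=> i j iS jS /(congr1 val) /=.
rewrite !inordK ?ltnS ?h_le //; exact: h_inj.
Qed.

Lemma card_relabel : #|relabel b h S| = #|S|.
Proof. exact: card_in_imset relabel_inj. Qed.

Lemma sum_relabel : \sum_(j in relabel b h S) (j : nat) = \sum_(i in S) h i.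
Proof.
rewrite big_imset /=; last exact: relabel_inj.
by apply: eq_bigr => i iS; rewrite inordK ?ltnS ?h_le.
Qed.

End Relabel.

Definition swap (x y v : nat) : nat := if v == x then y else v.

Lemma sum_swap a (S : {set 'I_a}) x y : part S x ->
  \sum_(i in S) swap x y i + x = \sum_(i in S) (i : nat) + y.
Proof.
case/partP=> i0 i0S <-; rewrite (bigD1 i0) // [in RHS](bigD1 i0) //= {1}/swap eqxx.
rewrite (eq_bigr (fun i : 'I_a => i : nat)) => [|i /andP[_ ii0]]; first by lia.
by rewrite /swap (inj_eq val_inj) (negbTE ii0).
Qed.

Section Swap.
Variables (a b x y : nat) (S : {set 'I_a}).
Hypotheses (Sx : part S x) (Sy : ~~ part S y).
Hypothesis swap_le : forall i : 'I_a, i \in S -> swap x y i <= b.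

Let T := relabel b (swap x y) S.

Lemma swap_inj : {in S &, injective (fun i : 'I_a => swap x y i)}.
Proof.
move=> i j iS jS; rewrite /swap.
case: (eqVneq (i : nat) x) => [ix|ix]; case: (eqVneq (j : nat) x) => [jx|jx].
- by move=> _; apply: val_inj; rewrite /= ix jx.
- by move=> yj; case/negP: Sy; apply/partP; exists j.
- by move=> iy; case/negP: Sy; apply/partP; exists i.
- exact: val_inj.
Qed.

Lemma part_swap v : part T v = (v == y) || (v != x) && part S v.
Proof.
apply/(part_relabelP swap_le)/idP => [[i iS <-]|].
  rewrite /swap; case: (eqVneq (i : nat) x) => [_|ix]; first by rewrite eqxx.
  by rewrite ix part_mem iS orbT.
case/orP=> [/eqP ->|/andP[vx /partP[i iS iv]]].
  by case/partP: Sx => i iS ix; exists i; rewrite // /swap ix eqxx.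
by exists i; rewrite // /swap iv (negbTE vx).
Qed.

Lemma card_swap : #|T| = #|S|.
Proof. exact: card_relabel swap_le swap_inj. Qed.

End Swap.

Lemma swap_back a b x y (S : {set 'I_a.+1}) :
  part S x -> ~~ part S y -> (forall i : 'I_a.+1, i \in S -> swap x y i <= b) ->
  relabel a (swap y x) (relabel b (swap x y) S) = S.
Proof.
move=> Sx Sy le_b; set T := relabel b (swap x y) S.
have partT := part_swap Sx le_b.
have xy : x != y by apply: contraNneq Sy => <-.
have Ty : part T y by rewrite partT eqxx.
have Tx : ~~ part T x by rewrite partT (negbTE xy) eqxx.
have le_a j : j \in T -> swap y x j <= a.
  rewrite /swap -part_mem partT; case: eqP => [_ _|_ /= /andP[_]].
    by case/partP: Sx => i _ <-; rewrite -ltnS ltn_ord.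
  by case/partP=> i _ <-; rewrite -ltnS ltn_ord.
apply: part_ext => v; rewrite (part_swap Ty le_a) partT.
case: (eqVneq v x) => [->|_]; first by rewrite Sx.
by case: (eqVneq v y) => [->|]; rewrite ?(negbTE Sy).
Qed.

Definition parity_sorted a (S : {set 'I_a}) : bool :=
  [forall i in S, forall j in S, (~~ odd i && odd j) ==> (i < j)].

Lemma parity_sortedP a (S : {set 'I_a}) :
  reflect (forall u v, part S u -> part S v -> ~~ odd u -> odd v -> u < v)
    (parity_sorted S).
Proof.
apply: (iffP forall_inP) => [H _ _ /partP[i iS <-] /partP[j jS <-] ie jo|H i iS].
  by have /forall_inP/(_ j jS)/implyP := H i iS; apply; rewrite ie jo.
apply/forall_inP => j jS; apply/implyP => /andP[ie jo].
by apply: H; rewrite ?part_mem.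
Qed.

Definition max_even a (S : {set 'I_a}) (v : nat) : bool :=
  ~~ odd v && [forall i in S, ~~ odd i ==> (i <= v)].
Definition min_odd a (S : {set 'I_a}) (v : nat) : bool :=
  odd v && [forall i in S, odd i ==> (v <= i)].

Lemma max_evenP a (S : {set 'I_a}) v :
  reflect (~~ odd v /\ forall u, part S u -> ~~ odd u -> u <= v) (max_even S v).
Proof.
apply: (iffP andP) => [[ve /forall_inP H]|[ve H]]; split=> //.
  by move=> _ /partP[i iS <-]; apply/implyP/H.
by apply/forall_inP => i iS; apply/implyP/H; rewrite part_mem.
Qed.

Lemma min_oddP a (S : {set 'I_a}) v :
  reflect (odd v /\ forall u, part S u -> odd u -> v <= u) (min_odd S v).
Proof.
apply: (iffP andP) => [[vo /forall_inP H]|[vo H]]; split=> //.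
  by move=> _ /partP[i iS <-]; apply/implyP/H.
by apply/forall_inP => i iS; apply/implyP/H; rewrite part_mem.
Qed.

Lemma exists_max_even a (S : {set 'I_a}) :
  (exists2 v, part S v & ~~ odd v) -> exists2 e, part S e & max_even S e.
Proof.
case=> _ /partP[i0 i0S <-] i0e.
have [|e /andP[eS ee] emax] := @arg_maxnP _ i0 [pred i | (i \in S) && ~~ odd i] val.
  by rewrite /= i0S.
exists (val e); rewrite ?part_mem //; apply/max_evenP; split=> // _ /partP[i iS <-] io.
by apply: emax; rewrite /= iS.
Qed.

Lemma exists_min_odd a (S : {set 'I_a}) :
  (exists2 v, part S v & odd v) -> exists2 o, part S o & min_odd S o.
Proof.
case=> _ /partP[i0 i0S <-] i0o.
have [|o /andP[oS oo] omin] := @arg_minnP _ i0 [pred i | (i \in S) && odd i] val.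
  by rewrite /= i0S.
exists (val o); rewrite ?part_mem //; apply/min_oddP; split=> // _ /partP[i iS <-] io.
by apply: omin; rewrite /= iS.
Qed.

Definition lower a b (S : {set 'I_a}) : {set 'I_b.+1} :=
  relabel b (fun v => if max_even S v then v.-1 else v) S.
Definition raise a b (S : {set 'I_a}) : {set 'I_b.+1} :=
  relabel b (fun v => if min_odd S v then v.+1 else v) S.

Lemma lower_swap a b (S : {set 'I_a}) e : part S e -> max_even S e ->
  lower b S = relabel b (swap e e.-1) S.
Proof.
move=> Se /max_evenP[ee emax]; apply: eq_in_imset => i iS; congr inord.
rewrite /swap; case: (eqVneq (i : nat) e) => [->|ie].
  by rewrite (introT (max_evenP _ _)).
case: (max_evenP S i) => // -[io imax]; case/eqP: ie.
by apply/eqP; rewrite eqn_leq imax // emax // part_mem.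
Qed.

Lemma raise_swap a b (S : {set 'I_a}) o : part S o -> min_odd S o ->
  raise b S = relabel b (swap o o.+1) S.
Proof.
move=> So /min_oddP[oo omin]; apply: eq_in_imset => i iS; congr inord.
rewrite /swap; case: (eqVneq (i : nat) o) => [->|io].
  by rewrite (introT (min_oddP _ _)).
case: (min_oddP S i) => // -[iodd imin]; case/eqP: io.
by apply/eqP; rewrite eqn_leq omin ?imin // part_mem.
Qed.

Definition with_even m n : {set {set 'I_n.+1}} :=
  [set S in distinct_partitions n |
     (#|S| == m) && parity_sorted S && [exists i in S, ~~ odd i]].
Definition with_odd m n : {set {set 'I_n.+1}} :=
  [set S in distinct_partitions n |
     (#|S| == m) && parity_sorted S && [exists i in S, odd i]].

Lemma pod_edE m n : pod_ed m n =
  #|[set S in distinct_partitions n | (#|S| == m) && parity_sorted S]|.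
Proof. by []. Qed.

(* A partition without even part is a partition into distinct odd parts and
   automatically satisfies the ordering condition; dually for odd parts. *)
Lemma pod_ed_split_even m n : pod_ed m n = D_o m n + #|with_even m n|.
Proof.
rewrite addnC pod_edE /D_o -(cardsID [set S : {set 'I_n.+1} | [exists i in S, ~~ odd i]]).
congr (_ + _); apply: eq_card => S; rewrite !inE ?andbA //.
rewrite negb_exists_in; under eq_forallb do rewrite negbK.
case: (boolP [forall i in S, odd i]) => [/forall_inP Sodd|]; last by rewrite !andbF.
have -> // : parity_sorted S.
by apply/parity_sortedP => u v /partP[i iS <-] _ /negP[]; apply: Sodd.
Qed.

Lemma pod_ed_split_odd m n : pod_ed m n = #|with_odd m n| + D_e m n.
Proof.
rewrite pod_edE /D_e -(cardsID [set S : {set 'I_n.+1} | [exists i in S, odd i]]).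
congr (_ + _); apply: eq_card => S; rewrite !inE ?andbA //.
rewrite negb_exists_in.
case: (boolP [forall i in S, ~~ odd i]) => [/forall_inP Seven|]; last by rewrite !andbF.
have -> // : parity_sorted S.
apply/parity_sortedP => u v _ /partP[j jS <-] _ jo.
by have := Seven j jS; rewrite jo.
Qed.

Lemma distinct_partitionsE n (S : {set 'I_n.+1}) :
  (S \in distinct_partitions n) = ~~ part S 0 && (\sum_(i in S) (i : nat) == n).
Proof. by rewrite inE (part_mem S ord0). Qed.

Lemma with_evenP m n (S : {set 'I_n.+1}) :
  reflect [/\ ~~ part S 0, \sum_(i in S) (i : nat) = n, #|S| = m, parity_sorted S
            & exists2 v, part S v & ~~ odd v]
    (S \in with_even m n).
Proof.
rewrite inE distinct_partitionsE -!andbA.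
have exP := exists_partP S (fun v => ~~ odd v).
apply: (iffP and5P) => [[S0 /eqP sumS /eqP cardS sortS /exP exS] //|].
by case=> S0 sumS cardS sortS /exP exS; split; rewrite ?sumS ?cardS.
Qed.

Lemma with_oddP m n (S : {set 'I_n.+1}) :
  reflect [/\ ~~ part S 0, \sum_(i in S) (i : nat) = n, #|S| = m, parity_sorted S
            & exists2 v, part S v & odd v]
    (S \in with_odd m n).
Proof.
rewrite inE distinct_partitionsE -!andbA.
have exP := exists_partP S odd.
apply: (iffP and5P) => [[S0 /eqP sumS /eqP cardS sortS /exP exS] //|].
by case=> S0 sumS cardS sortS /exP exS; split; rewrite ?sumS ?cardS.
Qed.

Lemma lower_with_even m k (S : {set 'I_k.+2}) : S \in with_even m k.+1 ->
  lower k S \in with_odd m k /\ raise k.+1 (lower k S) = S.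
Proof.
case/with_evenP=> S0 sumS cardS /parity_sortedP sortS exS.
have [e Se emax] := exists_max_even exS; have /max_evenP[ee e_max] := emax.
have e_gt0 : 0 < e by rewrite lt0n; apply: contraNneq S0 => <-.
have oe1 : odd e.-1 by move: ee; rewrite -{1}(prednK e_gt0) /= negbK.
have Se1 : ~~ part S e.-1.
  by apply/negP => /(sortS e e.-1 Se)/(_ ee oe1); rewrite ltnNge leq_pred.
have sum_lowered : \sum_(i in S) swap e e.-1 i = k.
  by have := sum_swap e.-1 Se; rewrite sumS; lia.
have le_k i : i \in S -> swap e e.-1 i <= k.
  by move=> iS; rewrite -[leqRHS]sum_lowered; apply: leq_sum_term.
rewrite (lower_swap _ Se emax); set T := relabel k (swap e e.-1) S.
have partT := part_swap Se le_k.
have Te1 : min_odd T e.-1.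
  apply/min_oddP; split=> // v; rewrite partT => /orP[/eqP -> //|/andP[_ Sv] vo].
  by have := sortS _ _ Se Sv ee vo; lia.
have Te : part T e.-1 by rewrite partT eqxx.
split; last by rewrite (raise_swap _ Te Te1) prednK //; apply: swap_back.
apply/with_oddP; split.
- rewrite partT (negbTE S0) andbF orbF eq_sym.
  by apply: contraTneq oe1 => ->.
- by rewrite (sum_relabel le_k (swap_inj Se1)).
- by rewrite card_swap.
- apply/parity_sortedP => u v; rewrite !partT.
  case/orP=> [/eqP -> | /andP[u_ne_e Su]]; first by rewrite oe1.
  case/orP=> [/eqP -> | /andP[_ Sv]] u_even v_odd; last exact: sortS.
  have u1_ne_e : u.+1 != e by apply: contraNneq ee => <-; rewrite /= u_even.
  by have := e_max u Su u_even; move: u_ne_e u1_ne_e; lia.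
- by exists e.-1; rewrite ?partT ?eqxx.
Qed.

Lemma raise_with_odd m k (T : {set 'I_k.+1}) : T \in with_odd m k ->
  raise k.+1 T \in with_even m k.+1 /\ lower k (raise k.+1 T) = T.
Proof.
case/with_oddP=> T0 sumT cardT /parity_sortedP sortT exT.
have [o To omin] := exists_min_odd exT; have /min_oddP[oo o_min] := omin.
have eo1 : ~~ odd o.+1 by rewrite /= negbK.
have To1 : ~~ part T o.+1.
  by apply/negP => /(sortT o.+1 o)/(_ To eo1 oo); rewrite ltnNge leqnSn.
have sum_raised : \sum_(i in T) swap o o.+1 i = k.+1.
  by have := sum_swap o.+1 To; rewrite sumT; lia.
have le_k i : i \in T -> swap o o.+1 i <= k.+1.
  by move=> iT; rewrite -[leqRHS]sum_raised; apply: leq_sum_term.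
rewrite (raise_swap _ To omin); set S := relabel k.+1 (swap o o.+1) T.
have partS := part_swap To le_k.
have So1 : max_even S o.+1.
  apply/max_evenP; split=> // u; rewrite partS => /orP[/eqP -> //|/andP[_ Tu] ue].
  by have := sortT _ _ Tu To ue oo; lia.
have So : part S o.+1 by rewrite partS eqxx.
split; last by rewrite (lower_swap _ So So1); apply: swap_back.
apply/with_evenP; split.
- by rewrite partS (negbTE T0) andbF.
- by rewrite (sum_relabel le_k (swap_inj To1)).
- by rewrite card_swap.
- apply/parity_sortedP => u v; rewrite !partS => Su.
  case/orP=> [/eqP -> | /andP[v_ne_o Tv]] u_even; first by rewrite (negbTE eo1).
  case/orP: Su u_even => [/eqP -> | /andP[_ Tu]] u_even v_odd; last exact: sortT.
  have o1_ne_v : o.+1 != v by apply: contraNneq u_even => ->.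
  by have := o_min v Tv v_odd; move: v_ne_o o1_ne_v; lia.
- by exists o.+1; rewrite ?partS ?eqxx.
Qed.

Lemma card_with_even_odd m k : #|with_even m k.+1| = #|with_odd m k|.
Proof.
apply: (@card_inverse _ _ _ _ (@lower k.+2 k) (@raise k.+1 k.+1)).
  exact: lower_with_even.
exact: raise_with_odd.
Qed.

Import GRing.Theory.
Local Open Scope ring_scope.

Theorem mainTheorem1 (m n : nat) (hm : (1 <= m)%N) (hn : (1 <= n)%N) :
  (pod_ed m n)%:Z - (pod_ed m n.-1)%:Z = (D_o m n)%:Z - (D_e m n.-1)%:Z.
Proof.
case: n hn => [//|k] _ /=.
rewrite (pod_ed_split_even m k.+1) (pod_ed_split_odd m k) card_with_even_odd.
by rewrite !PoszD addrKA.
Qed.
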